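(* Let $L\subseteq\Sigma^\omega$ be of the form $L=\bigcup_{i=1}^n U_iV_i^\omega$ where each $U_i\subseteq\Sigma^*$ is Parikh-recognizable and each $V_i\subseteq\Sigma^*$ is regular. Then $L$ is LPBA-recognizable.
   Context: For $V\subseteq\Sigma^*$, $V^\omega=\{w_1w_2\cdots\mid w_i\in V\setminus\{\varepsilon\}\}$. A semi-linear set in $\mathbb{N}^d$ (resp. $(\mathbb{N}\cup\{\infty\})^d$) is a finite union of sets $\{b_0+\sum_{j=1}^\ell b_jz_j\mid z_j\in\mathbb{N}\}$ with $b_j\in\mathbb{N}^d$ (resp. $(\mathbb{N}\cup\{\infty\})^d$), with arithmetic $z+\infty=\infty+z=\infty+\infty=\infty$, $z\cdot\infty=\infty\cdot z=\infty$ for $z>0$, $0\cdot\infty=\infty\cdot0=0$. A Parikh automaton (PA) of dimension $d$ is $(Q,\Sigma,q_0,\Delta,F,C)$ with finite $Q$, $q_0\in Q$, $F\subseteq Q$, finite $\Delta\subseteq Q\times\Sigma\times\mathbb{N}^d\times Q$, semi-linear $C\subseteq\mathbb{N}^d$; it accepts a finite word $x_1\cdots x_n$ if there is a run $r_i=(p_{i-1},x_i,\mathbf{v}_i,p_i)\in\Delta$, $p_0=q_0$, with $p_n\in F$ and $\sum_i\mathbf{v}_i\in C$; Parikh-recognizable languages are those accepted by PA. A limit Parikh–Büchi automaton (LPBA) is such a tuple but with $C\subseteq(\mathbb{N}\cup\{\infty\})^d$ semi-linear; a run $r_1r_2\cdots$ on an infinite word ($r_i=(p_{i-1},\alpha_i,\mathbf{v}_i,p_i)$,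 $p_0=q_0$) is accepting if $p_i\in F$ for infinitely many $i$ and $\rho(r)\in C$, where the $j$-th component of $\rho(r)$ is $\infty$ if infinitely many $\mathbf{v}_i$ have nonzero $j$-th component and otherwise is the finite sum of the $j$-th components. $L$ is LPBA-recognizable if it is the set of infinite words with an accepting run of some LPBA. *)

From mathcomp Require Import all_boot.
Set Implicit Arguments. Unset Strict Implicit. Unset Printing Implicit Defensive.

Definition vec (d : nat) := {ffun 'I_d -> nat}.

Inductive xnat := Fin of nat | Inf.

Definition xadd (x y : xnat) : xnat :=
  match x, y with Fin a, Fin b => Fin (a + b) | _, _ => Inf end.

Definition xscale (z : nat) (x : xnat) : xnat :=
  match x with Fin a => Fin (z * a) | Inf => if z == 0 then Fin 0 else Inf end.

Definition xvec (d : nat) := 'I_d -> xnat.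

Definition semilinear (d : nat) (C : vec d -> Prop) : Prop :=
  exists (m : nat) (l : 'I_m -> nat) (b0 : 'I_m -> vec d)
         (bs : forall i : 'I_m, 'I_(l i) -> vec d),
    forall v : vec d, C v <->
      exists (i : 'I_m) (z : 'I_(l i) -> nat),
        forall j : 'I_d, v j = b0 i j + \sum_(k < l i) z k * bs i k j.

Definition xsemilinear (d : nat) (C : xvec d -> Prop) : Prop :=
  exists (m : nat) (l : 'I_m -> nat) (b0 : 'I_m -> xvec d)
         (bs : forall i : 'I_m, 'I_(l i) -> xvec d),
    forall v : xvec d, C v <->
      exists (i : 'I_m) (z : 'I_(l i) -> nat),
        forall j : 'I_d,
          v j = xadd (b0 i j) (\big[xadd/Fin 0]_(k < l i) xscale (z k) (bs i k j)).

Record PA (Sigma : finType) (d : nat) := {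
  pa_Q : finType;
  pa_q0 : pa_Q;
  pa_delta : seq (pa_Q * Sigma * vec d * pa_Q);
  pa_F : {set pa_Q};
  pa_C : vec d -> Prop;
  pa_C_sl : semilinear pa_C
}.

Definition pa_accepts (Sigma : finType) (d : nat) (A : PA Sigma d)
    (w : seq Sigma) : Prop :=
  exists (p : nat -> pa_Q A) (v : nat -> vec d),
    p 0 = pa_q0 A /\
    (forall i : 'I_(size w),
        (p i, tnth (in_tuple w) i, v i, p i.+1) \in pa_delta A) /\
    p (size w) \in pa_F A /\
    pa_C A [ffun j => \sum_(i < size w) v i j].

Definition parikh_recognizable (Sigma : finType) (U : seq Sigma -> Prop) : Prop :=
  exists (d : nat) (A : PA Sigma d), forall w, U w <-> pa_accepts A w.

Record NFA (Sigma : finType) := {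
  nfa_Q : finType;
  nfa_q0 : nfa_Q;
  nfa_delta : nfa_Q -> Sigma -> nfa_Q -> bool;
  nfa_F : {set nfa_Q}
}.

Definition nfa_accepts (Sigma : finType) (A : NFA Sigma) (w : seq Sigma) : Prop :=
  exists p : nat -> nfa_Q A,
    p 0 = nfa_q0 A /\
    (forall i : 'I_(size w), @nfa_delta _ A (p i) (tnth (in_tuple w) i) (p i.+1)) /\
    p (size w) \in nfa_F A.

Definition regular (Sigma : finType) (V : seq Sigma -> Prop) : Prop :=
  exists A : NFA Sigma, forall w, V w <-> nfa_accepts A w.

Record LPBA (Sigma : finType) (d : nat) := {
  lp_Q : finType;
  lp_q0 : lp_Q;
  lp_delta : seq (lp_Q * Sigma * vec d * lp_Q);
  lp_F : {set lp_Q};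
  lp_C : xvec d -> Prop;
  lp_C_sl : xsemilinear lp_C
}.

(* r is the extended Parikh image rho of the sequence of labels v:
   component j is oo iff infinitely many v i have nonzero j-th component,
   and otherwise is the (finite) sum of the j-th components. *)
Definition is_rho (d : nat) (v : nat -> vec d) (r : xvec d) : Prop :=
  forall j : 'I_d,
    match r j with
    | Inf => forall N, exists i, N <= i /\ v i j <> 0
    | Fin n => exists N, (forall i, N <= i -> v i j = 0) /\
                         n = \sum_(i < N) v i j
    end.

Definition lpba_accepts (Sigma : finType) (d : nat) (A : LPBA Sigma d)
    (alpha : nat -> Sigma) : Prop :=
  exists (p : nat -> lp_Q A) (v : nat -> vec d),
    p 0 = lp_q0 A /\
    (forall i, (p i, alpha i, v i, p i.+1) \in lp_delta A) /\
    (forall N, exists i, N <= i /\ p i \in lp_F A) /\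
    (exists r : xvec d, is_rho v r /\ lp_C A r).

Definition lpba_recognizable (Sigma : finType) (L : (nat -> Sigma) -> Prop) : Prop :=
  exists (d : nat) (A : LPBA Sigma d), forall alpha, L alpha <-> lpba_accepts A alpha.

(* alpha in U V^omega: alpha = u w_0 w_1 ... with u in U, w_k in V \ {eps} *)
Definition in_UVomega (Sigma : finType) (U V : seq Sigma -> Prop)
    (alpha : nat -> Sigma) : Prop :=
  exists (u : seq Sigma) (ws : nat -> seq Sigma),
    U u /\
    (forall k, V (ws k) /\ ws k <> [::]) /\
    (forall t : 'I_(size u), alpha t = tnth (in_tuple u) t) /\
    (forall k (t : 'I_(size (ws k))),
        alpha (size u + \sum_(m < k) size (ws m) + t) = tnth (in_tuple (ws k)) t).

(** For one branch, an NFA for [V] that restarts from its initial state each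
    time it reaches a final state is a Büchi automaton for [V^omega]. An LPBA for
    [U V^omega] simulates a Parikh automaton for [U], its counters recording the
    Parikh image of the prefix, and hands over to the Büchi automaton from a final
    state; all later transitions carry the zero vector, so the limit image of a run
    is finite and equals the Parikh image of the prefix.
    LPBA-recognizable languages are closed under union: guess one of the two
    automata, keep the two counter blocks side by side and add one coordinate
    counting the transitions of the first automaton; its limit, infinite or zero,
    tells which of the two constraints applies. *)

From mathcomp Require Import all_boot zify.
From Stdlib Require Import ClassicalEpsilon.
Set Implicit Arguments. Unset Strict Implicit. Unset Printing Implicit Defensive.

Definition vec0 (d : nat) : vec d := [ffun => 0].

Lemma big_xscale_Fin L (z f : 'I_L -> nat) :
  \big[xadd/Fin 0]_(k < L) xscale (z k) (Fin (f k)) = Fin (\sum_(k < L) z k * f k).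
Proof. by elim/big_rec2: _ => // k a b _ ->. Qed.

Lemma big_xscale0 L (z : 'I_L -> nat) :
  \big[xadd/Fin 0]_(k < L) xscale (z k) (Fin 0) = Fin 0.
Proof. by rewrite (big_xscale_Fin z (fun _ => 0)) big1 // => k _; rewrite muln0. Qed.

Lemma xaddx0 x : xadd x (Fin 0) = x.
Proof. by case: x => // n /=; rewrite addn0. Qed.

Lemma xsemilinear0 d : xsemilinear (fun _ : xvec d => False).
Proof.
exists 0, (fun _ => 0), (fun _ _ => Fin 0), (fun _ _ _ => Fin 0) => v.
by split=> [|[[]]].
Qed.

Lemma xsemilinear_finType d (C : xvec d -> Prop) (T : finType) (l : T -> nat)
    (b0 : T -> xvec d) (bs : forall t, 'I_(l t) -> xvec d) :
  (forall v, C v <-> exists t (z : 'I_(l t) -> nat), forall j,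
     v j = xadd (b0 t j) (\big[xadd/Fin 0]_(k < l t) xscale (z k) (bs t k j))) ->
  xsemilinear C.
Proof.
move=> CE; exists #|T|, (l \o enum_val), (b0 \o enum_val), (fun i => bs (enum_val i)).
move=> v; rewrite CE; split=> [[t [z Ez]]|[i [z Ez]]]; last by exists (enum_val i), z.
by exists (enum_rank t); rewrite /= enum_rankK; exists z.
Qed.

Lemma xsemilinearU d (C1 C2 : xvec d -> Prop) :
  xsemilinear C1 -> xsemilinear C2 -> xsemilinear (fun r => C1 r \/ C2 r).
Proof.
move=> [m1 [l1 [b1 [bs1 E1]]]] [m2 [l2 [b2 [bs2 E2]]]].
pose l t := match t with inl i => l1 i | inr i => l2 i end.
apply: (@xsemilinear_finType _ _ ('I_m1 + 'I_m2)%type l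
  (fun t => match t with inl i => b1 i | inr i => b2 i end)
  (fun t => match t return 'I_(l t) -> xvec d with inl i => bs1 i | inr i => bs2 i end)).
move=> r; rewrite E1 E2; split=> [[] [i [z Ez]]|[[i|i] [z Ez]]].
- by exists (inl i), z.
- by exists (inr i), z.
- by left; exists i, z.
- by right; exists i, z.
Qed.

Definition xlift d (C : vec d -> Prop) (r : xvec d) : Prop :=
  exists c, C c /\ forall j, r j = Fin (c j).

Lemma xsemilinear_xlift d (C : vec d -> Prop) : semilinear C -> xsemilinear (xlift C).
Proof.
case=> m [l [b0 [bs E]]].
exists m, l, (fun i j => Fin (b0 i j)), (fun i k j => Fin (bs i k j)) => r; split.
- case=> c [/E [i [z Ez]] Er]; exists i, z => j.
  by rewrite Er Ez big_xscale_Fin.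
- case=> i [z Ez]; exists [ffun j => b0 i j + \sum_(k < l i) z k * bs i k j]; split.
  + by apply/E; exists i, z => j; rewrite ffunE.
  + by move=> j; rewrite Ez big_xscale_Fin ffunE.
Qed.

Definition rho_at (f : nat -> nat) (x : xnat) : Prop :=
  match x with
  | Inf => forall N, exists i, N <= i /\ f i <> 0
  | Fin n => exists N, (forall i, N <= i -> f i = 0) /\ n = \sum_(i < N) f i
  end.

Lemma rho_at_ext f g x : f =1 g -> rho_at f x -> rho_at g x.
Proof.
move=> E; case: x => [n [N [f0 ->]]|finf].
- by exists N; split=> [i Ni|]; [rewrite -E f0 | apply: eq_bigr].
- by move=> N; have [i [Ni fi]] := finf N; exists i; rewrite -E.
Qed.

Lemma is_rho_ext d (v w : nat -> vec d) (r s : xvec d) :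
  v =1 w -> r =1 s -> is_rho v r -> is_rho w s.
Proof. by move=> Evw Ers vr j; rewrite -Ers; apply: rho_at_ext (vr j) => i; rewrite Evw. Qed.

Lemma sum_eventually0 (f : nat -> nat) N M : N <= M -> (forall i, N <= i -> f i = 0) ->
  \sum_(i < M) f i = \sum_(i < N) f i.
Proof.
move=> NM f0; rewrite -!(big_mkord xpredT) (@big_cat_nat _ _ _ N 0 M _ _ (leq0n N) NM) /=.
rewrite [X in _ + X = _]big_nat_cond [X in _ + X = _]big1 ?addn0 // => i.
by case/andP=> /andP[Ni _] _; apply: f0.
Qed.

Lemma rho_at_fin f N : (forall i, N <= i -> f i = 0) -> rho_at f (Fin (\sum_(i < N) f i)).
Proof. by exists N. Qed.

Lemma rho_at_uniq f x y : rho_at f x -> rho_at f y -> x = y.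
Proof.
suff fin_uniq n z : rho_at f (Fin n) -> rho_at f z -> Fin n = z.
  case: x => [n|] fx fy; first exact: fin_uniq fx fy.
  by case: y fy => // n fy; rewrite (fin_uniq _ _ fy fx).
case=> N [f0 ->]; case: z => [n' [N' [f0' ->]]|finf]; last first.
  by have [i [Ni []]] := finf N; apply: f0.
by rewrite -(sum_eventually0 (leq_maxl N N') f0) -(sum_eventually0 (leq_maxr N N') f0').
Qed.

Definition rho_const d (c : vec d) : xvec d := fun j => if c j is 0 then Fin 0 else Inf.

Lemma is_rho_const d (c : vec d) : is_rho (fun _ => c) (rho_const c).
Proof.
move=> j; rewrite /rho_const; case: (c j) => [|n]; first by exists 0; rewrite big_ord0.
by move=> N; exists N.
Qed.

Record NBA (Sigma : finType) := {
  nba_Q : finType;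
  nba_q0 : nba_Q;
  nba_delta : nba_Q -> Sigma -> nba_Q -> bool;
  nba_F : {set nba_Q}
}.

Definition nba_accepts (Sigma : finType) (B : NBA Sigma) (beta : nat -> Sigma) : Prop :=
  exists p : nat -> nba_Q B,
    p 0 = nba_q0 B /\
    (forall i, nba_delta (p i) (beta i) (p i.+1)) /\
    (forall N, exists i, N <= i /\ p i \in nba_F B).

Definition nba_recognizable (Sigma : finType) (W : (nat -> Sigma) -> Prop) : Prop :=
  exists B : NBA Sigma, forall beta, W beta <-> nba_accepts B beta.

Definition omega_iter (Sigma : finType) (V : seq Sigma -> Prop) (beta : nat -> Sigma) : Prop :=
  exists ws : nat -> seq Sigma,
    (forall k, V (ws k) /\ ws k <> [::]) /\
    (forall k (t : 'I_(size (ws k))),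
        beta (\sum_(m < k) size (ws m) + t) = tnth (in_tuple (ws k)) t).

Lemma tnth_mkseq (T : Type) (f : nat -> T) n (i : 'I_(size (mkseq f n))) :
  tnth (in_tuple (mkseq f n)) i = f i.
Proof. by rewrite (tnth_nth (f 0)) nth_mkseq // -{2}(size_mkseq f n). Qed.

Section Locate.
Variables (l : nat -> nat) (l_gt0 : forall k, 0 < l k).

Fixpoint locate (t : nat) : nat * nat :=
  if t is t'.+1 then
    let: (k, o) := locate t' in if o.+1 < l k then (k, o.+1) else (k.+1, 0)
  else (0, 0).

Lemma locateP t : (locate t).2 < l (locate t).1 /\
  t = \sum_(m < (locate t).1) l m + (locate t).2.
Proof.
elim: t => [|t]; first by rewrite big_ord0 l_gt0.
rewrite /=; case: (locate t) => k o /= [lt_o_l ->].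
case: ifP => [|/negbT]; first by rewrite addnS.
by rewrite -leqNgt big_ord_recr /= l_gt0 => le_l_o; lia.
Qed.

Lemma locate_offset k o : o < l k -> locate (\sum_(m < k) l m + o) = (k, o).
Proof.
elim: k o => [|k IHk] o lt_o_l.
  rewrite big_ord0; elim: o lt_o_l => [//|o IHo] lt_o_l.
  by rewrite /= IHo ?(ltnW lt_o_l) // lt_o_l.
elim: o lt_o_l => [|o IHo] lt_o_l; last first.
  by rewrite addnS /= IHo ?(ltnW lt_o_l) // lt_o_l.
have lt_pred : (l k).-1 < l k by rewrite ltn_predL.
rewrite big_ord_recr addn0 /= -[X in locate (_ + X)](prednK (l_gt0 k)) addnS /= IHk //.
by rewrite prednK ?ltnn.
Qed.

End Locate.

Lemma leq_sum_pos (l : nat -> nat) k : (forall m, 0 < l m) -> k <= \sum_(m < k) l m.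
Proof.
move=> l_gt0; elim: k => [|k IHk] //.
by rewrite big_ord_recr /= -addn1 leq_add.
Qed.

Section Boundaries.
Variables (P : pred nat) (P_inf : forall N, exists i, (N < i) && P i).

Fixpoint boundary k := if k is k'.+1 then ex_minn (P_inf (boundary k')) else 0.

Lemma boundaryP k : [/\ boundary k < boundary k.+1, P (boundary k.+1)
  & forall t, boundary k < t < boundary k.+1 -> ~~ P t].
Proof.
rewrite /=; case: ex_minnP => b /andP[lt_b Pb] b_min; split=> // t /andP[lt_t lt_tb].
by apply/negP => Pt; have := b_min t; rewrite lt_t Pt leqNgt lt_tb => /(_ isT).
Qed.

End Boundaries.

Lemma omega_iter_mono (Sigma : finType) (V V' : seq Sigma -> Prop) beta :
  (forall w, V w -> V' w) -> omega_iter V beta -> omega_iter V' beta.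
Proof.
by move=> VV' [ws [wsV ws_beta]]; exists ws; split=> // k; case: (wsV k); split; auto.
Qed.

Section OmegaIteration.
Variables (Sigma : finType) (B : NFA Sigma).
Local Notation P := (nfa_Q B).

(* [None] is the initial state of [B] at a factor boundary: entering it
   means that a factor accepted by [B] has just been read. *)
Definition omega_delta (x : option P) (a : Sigma) (y : option P) : bool :=
  let p := odflt (nfa_q0 B) x in
  if y is Some p' then nfa_delta p a p'
  else [exists p', nfa_delta p a p' && (p' \in nfa_F B)].

Definition omega_nba : NBA Sigma :=
  {| nba_Q := option P; nba_q0 := None; nba_delta := omega_delta; nba_F := [set None] |}.

Lemma omega_nba_complete beta :
  omega_iter (nfa_accepts B) beta -> nba_accepts omega_nba beta.
Proof.
case=> ws [wsV ws_beta].
pose l k := size (ws k).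
have l_gt0 k : 0 < l k by rewrite lt0n size_eq0; apply/eqP; case: (wsV k).
have [R runR] := choice _ (fun k => proj1 (wsV k)).
pose st t : option P :=
  if (locate l t).2 is 0 then None else Some (R (locate l t).1 (locate l t).2).
exists st; split=> //; split=> [t|N]; last first.
  exists (\sum_(m < N) l m); split; first exact: leq_sum_pos.
  by rewrite /st -[X in locate _ X]addn0 locate_offset ?inE.
case E: (locate l t) => [k o]; have [lt_o_l t_eq] := locateP l_gt0 t.
rewrite E /= in lt_o_l t_eq.
have [R0 [R_step R_fin]] := runR k.
have st_t : odflt (nfa_q0 B) (st t) = R k o by rewrite /st E; case: o {t_eq lt_o_l E}.
have st_t1 : st t.+1 = if o.+1 < l k then Some (R k o.+1) else None.
  by rewrite /st /= E; case: ifP.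
have := R_step (Ordinal lt_o_l); rewrite -ws_beta /= -t_eq.
rewrite /= /omega_delta st_t st_t1; case: ifP => // /negbT; rewrite -leqNgt => le_l_o1 step.
apply/existsP; exists (R k o.+1); rewrite step.
by have -> : o.+1 = l k by apply/eqP; rewrite eqn_leq le_l_o1 lt_o_l.
Qed.

Lemma omega_nba_sound beta :
  nba_accepts omega_nba beta -> omega_iter (nfa_accepts B) beta.
Proof.
case=> st [st0 [st_step st_buchi]].
have none_inf N : exists i, (N < i) && (st i == None).
  by have [i [lt_N_i]] := st_buchi N.+1; rewrite inE => st_i; exists i; rewrite lt_N_i.
pose b := boundary none_inf.
have st_b k : st (b k) = None.
  by case: k => [//|k]; have [_ /eqP ? _] := boundaryP none_inf k.
pose ws k := mkseq (fun o => beta (b k + o)) (b k.+1 - b k).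
have sum_ws k : \sum_(m < k) size (ws m) = b k.
  elim: k => [|k IHk]; first by rewrite big_ord0.
  rewrite big_ord_recr /= IHk size_mkseq subnKC //.
  by have [/ltnW] := boundaryP none_inf k.
exists ws; split=> [k|k t]; last by rewrite sum_ws tnth_mkseq.
have [lt_b _ gap] := boundaryP none_inf k.
rewrite -/b in lt_b gap.
set l := b k.+1 - b k.
have l_gt0 : 0 < l by rewrite subn_gt0.
have b_l : b k + l = b k.+1 by rewrite subnKC // ltnW.
split; last by apply/eqP; rewrite -size_eq0 size_mkseq -lt0n.
have := st_step (b k + l.-1); rewrite -addnS prednK // b_l st_b /=.
case/existsP=> pend /andP[pend_step pend_F].
exists (fun o => if o < l then odflt (nfa_q0 B) (st (b k + o)) else pend).
split; first by rewrite l_gt0 addn0 st_b.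
split; last by rewrite size_mkseq ltnn.
move=> [o /= lt_o]; have lt_o_l : o < l by rewrite size_mkseq in lt_o.
rewrite tnth_mkseq /= lt_o_l.
have [lt_o1_l|] := ltnP o.+1 l; last first.
  by move=> le_l_o1; have -> : o = l.-1 by lia.
case st_o1: (st (b k + o.+1)) => [p|]; last first.
  by have := gap (b k + o.+1); rewrite st_o1 eqxx; lia.
by have := st_step (b k + o); rewrite -addnS st_o1.
Qed.

End OmegaIteration.

Lemma omega_iter_nba (Sigma : finType) (V : seq Sigma -> Prop) :
  regular V -> nba_recognizable (omega_iter V).
Proof.
case=> B VB; exists (omega_nba B) => beta; split.
- by move=> /(omega_iter_mono (fun w => proj1 (VB w))) /omega_nba_complete.
- by move=> /omega_nba_sound /(omega_iter_mono (fun w => proj2 (VB w))).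
Qed.

Definition omega_cat (Sigma : finType) (U : seq Sigma -> Prop)
    (W : (nat -> Sigma) -> Prop) (alpha : nat -> Sigma) : Prop :=
  exists u, U u /\ (forall t : 'I_(size u), alpha t = tnth (in_tuple u) t) /\
    W (fun t => alpha (size u + t)).

Lemma omega_cat_mono (Sigma : finType) (U U' : seq Sigma -> Prop)
    (W W' : (nat -> Sigma) -> Prop) alpha :
  (forall u, U u -> U' u) -> (forall beta, W beta -> W' beta) ->
  omega_cat U W alpha -> omega_cat U' W' alpha.
Proof. by move=> UU' WW' [u [/UU' Uu [u_alpha /WW' W_alpha]]]; exists u. Qed.

Section Concatenation.
Variables (Sigma : finType) (d : nat) (A : PA Sigma d) (B : NBA Sigma).
Local Notation St := (pa_Q A + nba_Q B)%type.

Definition handover (s : St) : option (nba_Q B) :=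
  match s with
  | inl q => if q \in pa_F A then Some (nba_q0 B) else None
  | inr p => Some p
  end.

Definition cat_step (s : St) (a : Sigma) (p' : nba_Q B) : bool :=
  if handover s is Some p then nba_delta p a p' else false.

Definition cat_delta : seq (St * Sigma * vec d * St) :=
  [seq (inl e.1.1.1, e.1.1.2, e.1.2, inl e.2) | e <- pa_delta A] ++
  [seq (e.1.1, e.1.2, vec0 d, inr e.2)
    | e <- enum [pred e : St * Sigma * nba_Q B | cat_step e.1.1 e.1.2 e.2]].

Lemma mem_cat_delta s a w s' : ((s, a, w, s') \in cat_delta) =
  match s' with
  | inl q' => if s is inl q then (q, a, w, q') \in pa_delta A else false
  | inr p' => (w == vec0 d) && cat_step s a p'
  end.
Proof.
rewrite mem_cat; case: s' => [q'|p'].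
- rewrite [X in _ || X](negbTE (_ : _ \notin _)) ?orbF; last by apply/mapP => -[e _ []].
  case: s => [q|p]; last by apply/mapP => -[e _ []].
  apply/mapP/idP => [[[[[q1 a1] w1] q1'] e_in [-> -> -> ->]] //|e_in].
  by exists (q, a, w, q').
- rewrite (negbTE (_ : _ \notin _)) ?orFb; last by apply/mapP => -[e _ []].
  apply/mapP/andP => [[[[s1 a1] p1] e_in [-> -> -> ->]]|[/eqP-> step]].
    by rewrite mem_enum in e_in.
  by exists (s, a, p'); rewrite ?mem_enum.
Qed.

Definition cat_lpba : LPBA Sigma d :=
  {| lp_Q := St; lp_q0 := inl (pa_q0 A); lp_delta := cat_delta;
     lp_F := [set s | if s is inr p then p \in nba_F B else false];
     lp_C := xlift (pa_C A); lp_C_sl := xsemilinear_xlift (pa_C_sl A) |}.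

Lemma cat_lpba_complete alpha :
  omega_cat (pa_accepts A) (nba_accepts B) alpha -> lpba_accepts cat_lpba alpha.
Proof.
case=> u [[p [v [p0 [p_step [p_fin p_C]]]]] [u_alpha [pi [pi0 [pi_step pi_buchi]]]]].
set m := size u in p_fin p_C pi_step pi_buchi *.
pose st t : St := if t <= m then inl (p t) else inr (pi (t - m)).
pose lab t := if t < m then v t else vec0 d.
have handover_st t : m <= t -> handover (st t) = Some (pi (t - m)).
  rewrite /st leq_eqVlt => /orP[/eqP<-|lt_m_t]; first by rewrite leqnn /= p_fin subnn pi0.
  by rewrite leqNgt lt_m_t.
exists st, lab; split; first by rewrite /st leq0n p0.
split=> [t|]; [|split=> [N|]].
- rewrite /= mem_cat_delta; case: (ltnP t m) => [lt_t_m|le_m_t].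
    rewrite /st /lab lt_t_m (ltnW lt_t_m).
    by have := p_step (Ordinal lt_t_m); rewrite -u_alpha.
  rewrite /st leqNgt ltnS le_m_t -/(st t) /lab ltnNge le_m_t eqxx.
  rewrite /cat_step handover_st // subSn //.
  by have := pi_step (t - m); rewrite subnKC.
- have [i [lt_N_i pi_i]] := pi_buchi N.+1; exists (m + i); split; first by lia.
  by rewrite inE /st leqNgt -{1}[m]addn0 ltn_add2l (leq_trans _ lt_N_i) // addKn.
exists (fun j => Fin (\sum_(i < m) v i j)); split.
  move=> j /=; rewrite (eq_bigr (fun i : 'I_m => lab i j)) => [|i _]; last first.
    by rewrite /lab ltn_ord.
  by apply: rho_at_fin => i; rewrite /lab ltnNge => ->; rewrite ffunE.
by exists [ffun j => \sum_(i < m) v i j]; split=> // j; rewrite ffunE.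
Qed.

Lemma cat_run_split (st : nat -> St) (lab : nat -> vec d) alpha :
  st 0 = inl (pa_q0 A) -> (forall t, (st t, alpha t, lab t, st t.+1) \in cat_delta) ->
  (exists t p, st t = inr p) ->
  exists m, [/\ forall t, t <= m -> exists q, st t = inl q
    & forall t, m <= t ->
        lab t = vec0 d /\ exists2 p', st t.+1 = inr p' & cat_step (st t) (alpha t) p'].
Proof.
move=> st0 st_step [[|t] [p st_p]]; first by rewrite st0 in st_p.
pose in_B (s : St) := if s is inr _ then true else false.
have: exists t, in_B (st t.+1) by exists t; rewrite st_p.
case/ex_minnP=> m st_m1 m_min; exists m; split=> [[|t'] le_t_m|].
- by exists (pa_q0 A).
- case st_t: (st t'.+1) => [q|p']; first by exists q.
  by have := m_min t'; rewrite st_t => /(_ isT); lia.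
have st_B t' : m < t' -> in_B (st t').
  elim: t' => // t' IHt; rewrite ltnS leq_eqVlt => /orP[/eqP<-//|/IHt].
  by have := st_step t'; rewrite mem_cat_delta; case: (st t') (st t'.+1) => [?|?] [].
move=> t' le_m_t; have := st_B t'.+1 le_m_t; have := st_step t'; rewrite mem_cat_delta.
by case: (st t'.+1) => // p' /andP[/eqP-> step]; split=> //; exists p'.
Qed.

Lemma cat_lpba_sound alpha :
  lpba_accepts cat_lpba alpha -> omega_cat (pa_accepts A) (nba_accepts B) alpha.
Proof.
case=> st [lab [st0 [st_step [st_buchi [r [rho_r [c [C_c r_c]]]]]]]].
have ex_B : exists t p, st t = inr p.
  by have [i [_]] := st_buchi 0; rewrite inE; case st_i: (st i) => // [p] _; exists i, p.
have [m [A_part B_part]] := cat_run_split st0 st_step ex_B.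
pose q t := if st t is inl q then q else pa_q0 A.
have st_A t : t <= m -> st t = inl (q t) by case/A_part=> q' st_t; rewrite /q st_t.
have [_ [p' _]] := B_part m (leqnn m); rewrite st_A // /cat_step /=.
case: ifP => // q_fin _.
exists (mkseq alpha m); split; [|split=> [t|]].
- exists q, lab; split; first by rewrite /q st0.
  split=> [[t /= lt_t]|]; last first.
    rewrite size_mkseq; split=> //; suff -> : [ffun j => \sum_(i < m) lab i j] = c by [].
    apply/ffunP => j; rewrite ffunE.
    have lab0 i : m <= i -> lab i j = 0 by case/B_part=> -> _; rewrite ffunE.
    by have := rho_at_uniq (rho_r j) (rho_at_fin lab0); rewrite r_c => -[].
  have lt_t_m : t < m by rewrite size_mkseq in lt_t.
  have := st_step t; rewrite /= mem_cat_delta tnth_mkseq /= !st_A //; exact: ltnW.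
- by rewrite tnth_mkseq.
rewrite size_mkseq; exists (fun t => odflt (nba_q0 B) (handover (st (m + t)))).
split; first by rewrite addn0 st_A //= q_fin.
split=> [t|N].
  have [_ [p'' st_t1]] := B_part (m + t) (leq_addr _ _).
  by rewrite addnS st_t1 /cat_step; case: handover.
have [i [le_i st_i]] := st_buchi (m + N); exists (i - m); split; first by lia.
by rewrite subnKC; [move: st_i; rewrite inE; case: (st i) | lia].
Qed.

End Concatenation.

Lemma omega_cat_lpba (Sigma : finType) (U : seq Sigma -> Prop) (W : (nat -> Sigma) -> Prop) :
  parikh_recognizable U -> nba_recognizable W -> lpba_recognizable (omega_cat U W).
Proof.
case=> d [A UA] [B WB]; exists d, (cat_lpba A B) => alpha; split.
- move/(omega_cat_mono (fun u => proj1 (UA u)) (fun beta => proj1 (WB beta))).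
  exact: cat_lpba_complete.
- move/cat_lpba_sound.
  exact: omega_cat_mono (fun u => proj2 (UA u)) (fun beta => proj2 (WB beta)).
Qed.

Section Padding.
Variables (d d' : nat) (emb : 'I_d -> 'I_d') (sel : 'I_d' -> option 'I_d).
Hypotheses (embK : pcancel emb sel) (selK : ocancel sel emb).

Definition vpad (c : vec d') (w : vec d) : vec d' :=
  [ffun j => if sel j is Some i then w i else c j].

Definition xpad (x : xvec d') (r : xvec d) : xvec d' :=
  fun j => if sel j is Some i then r i else x j.

Lemma vpad_emb c w i : vpad c w (emb i) = w i.
Proof. by rewrite ffunE embK. Qed.

Lemma xpad_emb x r i : xpad x r (emb i) = r i.
Proof. by rewrite /xpad embK. Qed.

Lemma is_rho_pad (c : vec d') (v : nat -> vec d) (r : xvec d') :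
  is_rho (fun t => vpad c (v t)) r <->
  is_rho v (r \o emb) /\ (forall j, sel j = None -> r j = rho_const c j).
Proof.
split=> [rho_r|[rho_v r_c] j].
  split=> [i|j sel_j]; first by apply: rho_at_ext (rho_r (emb i)) => t; rewrite ffunE embK.
  apply: rho_at_uniq (rho_r j) _; apply: rho_at_ext (is_rho_const c j) => t.
  by rewrite ffunE sel_j.
have := selK j; case sel_j: (sel j) => [i|] /= => [<-|_].
  by apply: rho_at_ext (rho_v i) => t; rewrite ffunE embK.
by rewrite r_c //; apply: rho_at_ext (is_rho_const c j) => t; rewrite ffunE sel_j.
Qed.

Lemma xsemilinear_pad (C : xvec d -> Prop) (x : xvec d') :
  xsemilinear C -> xsemilinear (fun r => exists2 r0, C r0 & r =1 xpad x r0).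
Proof.
case=> m [l [b0 [bs E]]].
exists m, l, (fun i => xpad x (b0 i)), (fun i k => xpad (fun _ => Fin 0) (bs i k)) => r.
split=> [[r0 /E [i [z E0]] Er]|[i [z Er]]].
  exists i, z => j; rewrite Er /xpad.
  by case: (sel j) => [i0|]; rewrite ?E0 ?big_xscale0 ?xaddx0.
exists (fun i0 => xadd (b0 i i0) (\big[xadd/Fin 0]_(k < l i) xscale (z k) (bs i k i0))).
  by apply/E; exists i, z.
by move=> j; rewrite Er /xpad; case: (sel j) => [i0|]; rewrite ?big_xscale0 ?xaddx0.
Qed.

End Padding.

Section Union.
Variables (Sigma : finType) (d1 d2 : nat) (A1 : LPBA Sigma d1) (A2 : LPBA Sigma d2).
Local Notation D := (d1 + d2 + 1).
Local Notation Q1 := (lp_Q A1).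
Local Notation Q2 := (lp_Q A2).
Local Notation SU := (option (Q1 + Q2)).

Definition embL (j : 'I_d1) : 'I_D := lshift 1 (lshift d2 j).
Definition embR (j : 'I_d2) : 'I_D := lshift 1 (rshift d1 j).
Definition tag : 'I_D := rshift (d1 + d2) ord0.

Definition selL (j : 'I_D) : option 'I_d1 :=
  if split j is inl j' then (if split j' is inl j1 then Some j1 else None) else None.
Definition selR (j : 'I_D) : option 'I_d2 :=
  if split j is inl j' then (if split j' is inr j2 then Some j2 else None) else None.

Lemma embLK : pcancel embL selL.
Proof. by move=> j; rewrite /selL /embL (unsplitK (inl _)) (unsplitK (inl _)). Qed.

Lemma embRK : pcancel embR selR.
Proof. by move=> j; rewrite /selR /embR (unsplitK (inl _)) (unsplitK (inr _)). Qed.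

Lemma selLK : ocancel selL embL.
Proof.
move=> j; rewrite /selL; case: (split j) (splitK j) => [j'|k] <- //=.
by case: (split j') (splitK j') => [j1|j2] <-.
Qed.

Lemma selRK : ocancel selR embR.
Proof.
move=> j; rewrite /selR; case: (split j) (splitK j) => [j'|k] <- //=.
by case: (split j') (splitK j') => [j1|j2] <-.
Qed.

Lemma selL_tag : selL tag = None.
Proof. by rewrite /selL /tag (unsplitK (inr _)). Qed.

Lemma selR_tag : selR tag = None.
Proof. by rewrite /selR /tag (unsplitK (inr _)). Qed.

Definition tag_vec : vec D := [ffun j => nat_of_bool (j == tag)].

Definition state_l (s : SU) : option Q1 :=
  match s with None => Some (lp_q0 A1) | Some (inl q) => Some q | Some (inr _) => None end.
Definition state_r (s : SU) : option Q2 :=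
  match s with None => Some (lp_q0 A2) | Some (inr q) => Some q | Some (inl _) => None end.

Definition union_delta : seq (SU * Sigma * vec D * SU) :=
  [seq (s, e.1.1.2, vpad selL tag_vec e.1.2, Some (inl e.2))
    | s <- enum {: SU}, e <- [seq e <- lp_delta A1 | state_l s == Some e.1.1.1]] ++
  [seq (s, e.1.1.2, vpad selR (vec0 D) e.1.2, Some (inr e.2))
    | s <- enum {: SU}, e <- [seq e <- lp_delta A2 | state_r s == Some e.1.1.1]].

Lemma union_delta_l s q a w q' : state_l s = Some q -> (q, a, w, q') \in lp_delta A1 ->
  (s, a, vpad selL tag_vec w, Some (inl q')) \in union_delta.
Proof.
move=> state_s e_in; rewrite mem_cat; apply/orP; left; apply/allpairsPdep.
by exists s, (q, a, w, q'); rewrite mem_enum mem_filter /= state_s eqxx.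
Qed.

Lemma union_delta_r s q a w q' : state_r s = Some q -> (q, a, w, q') \in lp_delta A2 ->
  (s, a, vpad selR (vec0 D) w, Some (inr q')) \in union_delta.
Proof.
move=> state_s e_in; rewrite mem_cat; apply/orP; right; apply/allpairsPdep.
by exists s, (q, a, w, q'); rewrite mem_enum mem_filter /= state_s eqxx.
Qed.

Lemma union_deltaP s a w s' : (s, a, w, s') \in union_delta ->
  match s' with
  | Some (inl q') => exists q w1,
      [/\ state_l s = Some q, w = vpad selL tag_vec w1 & (q, a, w1, q') \in lp_delta A1]
  | Some (inr q') => exists q w2,
      [/\ state_r s = Some q, w = vpad selR (vec0 D) w2 & (q, a, w2, q') \in lp_delta A2]
  | None => False
  end.
Proof.
rewrite mem_cat => /orP[] /allpairsPdep[s0 [[[[q a0] w0] q'] [_ + [-> -> -> ->]]]];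
  by rewrite mem_filter => /andP[/eqP state_s e_in]; exists q, w0.
Qed.

Definition union_F : {set SU} := [set s : SU | match s with
  | Some (inl q) => q \in lp_F A1 | Some (inr q) => q \in lp_F A2 | None => false end].

Definition union_C (r : xvec D) : Prop :=
  (exists2 r1, lp_C A1 r1 & r =1 xpad selL (rho_const tag_vec) r1) \/
  (exists2 r2, lp_C A2 r2 & r =1 xpad selR (rho_const (vec0 D)) r2).

Lemma xsemilinear_union_C : xsemilinear union_C.
Proof.
exact: xsemilinearU (xsemilinear_pad _ _ (lp_C_sl A1)) (xsemilinear_pad _ _ (lp_C_sl A2)).
Qed.

Definition union_lpba : LPBA Sigma D :=
  {| lp_Q := SU; lp_q0 := None; lp_delta := union_delta; lp_F := union_F;
     lp_C := union_C; lp_C_sl := xsemilinear_union_C |}.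

Lemma union_lpba_complete_l alpha : lpba_accepts A1 alpha -> lpba_accepts union_lpba alpha.
Proof.
case=> p [v [p0 [p_step [p_buchi [r1 [rho_r1 C_r1]]]]]].
pose st t : SU := if t is 0 then None else Some (inl (p t)).
have state_st t : state_l (st t) = Some (p t) by case: t => //=; rewrite p0.
exists st, (fun t => vpad selL tag_vec (v t)); split=> //; split=> [t|].
  exact: union_delta_l (state_st t) (p_step t).
split=> [N|].
  have [[|i] [le_i p_i]] := p_buchi N.+1; first by [].
  by exists i.+1; split; [exact: ltnW | rewrite inE].
exists (xpad selL (rho_const tag_vec) r1); split; last by left; exists r1.
apply/(is_rho_pad embLK selLK); split=> [|j sel_j]; last by rewrite /xpad sel_j.
by apply: is_rho_ext rho_r1 => // i; rewrite /= (xpad_emb embLK).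
Qed.

Lemma union_lpba_complete_r alpha : lpba_accepts A2 alpha -> lpba_accepts union_lpba alpha.
Proof.
case=> p [v [p0 [p_step [p_buchi [r2 [rho_r2 C_r2]]]]]].
pose st t : SU := if t is 0 then None else Some (inr (p t)).
have state_st t : state_r (st t) = Some (p t) by case: t => //=; rewrite p0.
exists st, (fun t => vpad selR (vec0 D) (v t)); split=> //; split=> [t|].
  exact: union_delta_r (state_st t) (p_step t).
split=> [N|].
  have [[|i] [le_i p_i]] := p_buchi N.+1; first by [].
  by exists i.+1; split; [exact: ltnW | rewrite inE].
exists (xpad selR (rho_const (vec0 D)) r2); split; last by right; exists r2.
apply/(is_rho_pad embRK selRK); split=> [|j sel_j]; last by rewrite /xpad sel_j.
by apply: is_rho_ext rho_r2 => // i; rewrite /= (xpad_emb embRK).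
Qed.

Lemma union_run_l (st : nat -> SU) lab alpha q :
  st 0 = None -> st 1 = Some (inl q) ->
  (forall t, (st t, alpha t, lab t, st t.+1) \in union_delta) ->
  exists p v, [/\ p 0 = lp_q0 A1, forall t, (p t, alpha t, v t, p t.+1) \in lp_delta A1,
    forall t, st t.+1 = Some (inl (p t.+1)) & forall t, lab t = vpad selL tag_vec (v t)].
Proof.
move=> st0 st1 st_step.
have st_l t : exists q', st t.+1 = Some (inl q').
  elim: t => [|t [q' st_t1]]; first by exists q.
  have := union_deltaP (st_step t.+1); rewrite st_t1.
  by case: (st t.+2) => [[q''|q'']|] //; [exists q'' | case=> ? [? []]].
pose p t := odflt (lp_q0 A1) (state_l (st t)).
pose v t : vec d1 := [ffun i => lab t (embL i)].
have step t : exists q', [/\ state_l (st t) = Some (p t), st t.+1 = Some (inl q'),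
    lab t = vpad selL tag_vec (v t) & (p t, alpha t, v t, q') \in lp_delta A1].
  have [q' st_t1] := st_l t; have := union_deltaP (st_step t); rewrite st_t1.
  case=> q0 [w [state_t lab_t e_in]]; exists q'; rewrite /p state_t lab_t.
  suff -> : v t = w by [].
  by apply/ffunP => i; rewrite ffunE lab_t (vpad_emb embLK).
exists p, v; split=> [|t|t|t]; first by rewrite /p st0.
- by have [q' [_ st_t1 _]] := step t; rewrite /p st_t1.
- by have [q' [_ st_t1 _]] := step t; rewrite /p st_t1.
- by have [q' []] := step t.
Qed.

Lemma union_run_r (st : nat -> SU) lab alpha q :
  st 0 = None -> st 1 = Some (inr q) ->
  (forall t, (st t, alpha t, lab t, st t.+1) \in union_delta) ->
  exists p v, [/\ p 0 = lp_q0 A2, forall t, (p t, alpha t, v t, p t.+1) \in lp_delta A2,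
    forall t, st t.+1 = Some (inr (p t.+1)) & forall t, lab t = vpad selR (vec0 D) (v t)].
Proof.
move=> st0 st1 st_step.
have st_r t : exists q', st t.+1 = Some (inr q').
  elim: t => [|t [q' st_t1]]; first by exists q.
  have := union_deltaP (st_step t.+1); rewrite st_t1.
  by case: (st t.+2) => [[q''|q'']|] //; [case=> ? [? []] | exists q''].
pose p t := odflt (lp_q0 A2) (state_r (st t)).
pose v t : vec d2 := [ffun i => lab t (embR i)].
have step t : exists q', [/\ state_r (st t) = Some (p t), st t.+1 = Some (inr q'),
    lab t = vpad selR (vec0 D) (v t) & (p t, alpha t, v t, q') \in lp_delta A2].
  have [q' st_t1] := st_r t; have := union_deltaP (st_step t); rewrite st_t1.
  case=> q0 [w [state_t lab_t e_in]]; exists q'; rewrite /p state_t lab_t.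
  suff -> : v t = w by [].
  by apply/ffunP => i; rewrite ffunE lab_t (vpad_emb embRK).
exists p, v; split=> [|t|t|t]; first by rewrite /p st0.
- by have [q' [_ st_t1 _]] := step t; rewrite /p st_t1.
- by have [q' [_ st_t1 _]] := step t; rewrite /p st_t1.
- by have [q' []] := step t.
Qed.

Lemma tag_rho_const : rho_const tag_vec tag <> rho_const (vec0 D) tag.
Proof. by rewrite /rho_const !ffunE eqxx. Qed.

Lemma union_lpba_sound alpha :
  lpba_accepts union_lpba alpha -> lpba_accepts A1 alpha \/ lpba_accepts A2 alpha.
Proof.
case=> st [lab [st0 [st_step [st_buchi [r [rho_r C_r]]]]]].
have := union_deltaP (st_step 0); rewrite st0; case st1: (st 1) => [[q|q]|] // _.
- left; have [p [v [p0 p_step st_p lab_v]]] := union_run_l st0 st1 st_step.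
  exists p, v; split=> //; split=> //; split=> [N|].
    have [[|i] [le_i st_i]] := st_buchi N.+1; first by [].
    by exists i.+1; split; [exact: ltnW | move: st_i; rewrite st_p inE].
  have /(is_rho_pad embLK selLK) [rho_v r_tag] := is_rho_ext lab_v (frefl r) rho_r.
  case: C_r => [[r1 C_r1 r_r1]|[r2 _ r_r2]]; last first.
    by case: tag_rho_const; rewrite -r_tag ?selL_tag // r_r2 /xpad selR_tag.
  exists r1; split=> //; apply: is_rho_ext rho_v => // i.
  by rewrite /= r_r1 (xpad_emb embLK).
- right; have [p [v [p0 p_step st_p lab_v]]] := union_run_r st0 st1 st_step.
  exists p, v; split=> //; split=> //; split=> [N|].
    have [[|i] [le_i st_i]] := st_buchi N.+1; first by [].
    by exists i.+1; split; [exact: ltnW | move: st_i; rewrite st_p inE].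
  have /(is_rho_pad embRK selRK) [rho_v r_tag] := is_rho_ext lab_v (frefl r) rho_r.
  case: C_r => [[r1 _ r_r1]|[r2 C_r2 r_r2]].
    by case: tag_rho_const; rewrite -(r_tag tag) ?selR_tag // r_r1 /xpad selL_tag.
  exists r2; split=> //; apply: is_rho_ext rho_v => // i.
  by rewrite /= r_r2 (xpad_emb embRK).
Qed.

End Union.

Lemma lpba_recognizable_ext (Sigma : finType) (L L' : (nat -> Sigma) -> Prop) :
  (forall alpha, L alpha <-> L' alpha) -> lpba_recognizable L -> lpba_recognizable L'.
Proof. by move=> LL' [d [A LA]]; exists d, A => alpha; rewrite -LL'. Qed.

Lemma lpba_recognizable0 (Sigma : finType) : lpba_recognizable (fun _ : nat -> Sigma => False).
Proof.
exists 0, {| lp_Q := unit; lp_q0 := tt; lp_delta := [::]; lp_F := set0;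
             lp_C := fun _ => False; lp_C_sl := xsemilinear0 0 |} => alpha.
by split=> // -[p [v [_ [/(_ 0)]]]].
Qed.

Lemma lpba_recognizableU (Sigma : finType) (L1 L2 : (nat -> Sigma) -> Prop) :
  lpba_recognizable L1 -> lpba_recognizable L2 ->
  lpba_recognizable (fun alpha => L1 alpha \/ L2 alpha).
Proof.
case=> d1 [A1 L1A] [d2 [A2 L2A]]; exists (d1 + d2 + 1), (union_lpba A1 A2) => alpha.
split=> [[/L1A/union_lpba_complete_l|/L2A/union_lpba_complete_r] //|].
by case/union_lpba_sound=> [/L1A|/L2A]; [left|right].
Qed.

Lemma in_UVomegaE (Sigma : finType) (U V : seq Sigma -> Prop) alpha :
  in_UVomega U V alpha <-> omega_cat U (omega_iter V) alpha.
Proof.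
split=> [[u [ws [Uu [wsV [u_alpha ws_alpha]]]]]|[u [Uu [u_alpha [ws [wsV ws_alpha]]]]]].
  by exists u; split=> //; split=> //; exists ws; split=> // k t; rewrite addnA.
by exists u, ws; split=> //; split=> //; split=> // k t; rewrite -addnA.
Qed.

Theorem lemma5 (Sigma : finType) (n : nat) (U V : 'I_n -> seq Sigma -> Prop) :
  (forall i, parikh_recognizable (U i)) ->
  (forall i, regular (V i)) ->
  lpba_recognizable (fun alpha : nat -> Sigma =>
    exists i : 'I_n, in_UVomega (U i) (V i) alpha).
Proof.
elim: n U V => [|n IHn] U V U_pa V_reg.
  by apply: lpba_recognizable_ext (@lpba_recognizable0 Sigma) => alpha; split=> // -[[]].
have branch i : lpba_recognizable (in_UVomega (U i) (V i)).
  apply: lpba_recognizable_ext (omega_cat_lpba (U_pa i) (omega_iter_nba (V_reg i))).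
  by move=> alpha; rewrite in_UVomegaE.
have IH := IHn (U \o lift ord0) (V \o lift ord0) (fun i => U_pa _) (fun i => V_reg _).
apply: lpba_recognizable_ext (lpba_recognizableU (branch ord0) IH) => alpha.
split=> [[|[i]]|[i]]; [by exists ord0 | by exists (lift ord0 i) |].
by case: (unliftP ord0 i) => [j ->|->]; [right; exists j | left].
Qed.
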